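(* Let $X$ be a $T_1$ topological space. (i) A nonzero ideal $I$ of $C_c(X)_F$ is minimal if and only if $I$ is generated by $\chi_{\{a\}}$ for some $a\in X$. (ii) A nonzero ideal $I$ of $C_c(X)_F$ is minimal if and only if $|Z[I]|=2$. (iii) The socle of $C_c(X)_F$ is the set of all $f\in C_c(X)_F$ such that $X\setminus Z(f)$ is finite. (iv) The socle of $C_c(X)_F$ is an essential ideal and $\bigcap_{f\in \mathrm{Soc}}Z(f)=\emptyset$.
   Context: $C_c(X)_F$ denotes the set of all functions $f:X\to\mathbb{R}$ whose range is countable and whose set of points of discontinuity is finite; it is a commutative ring with unity under pointwise operations. $Z(f)=\{x:f(x)=0\}$, $Z[I]=\{Z(f):f\in I\}$. $\chi_{\{a\}}$ is the function equal to $1$ at $a$ and $0$ elsewhere. The socle $\mathrm{Soc}$ of a commutative ring is the sum of all its minimal ideals. An ideal is essential if it meets every nonzero ideal nontrivially. *)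

From HB Require Import structures.
From mathcomp Require Import all_boot all_order all_algebra.
From mathcomp Require Import all_classical all_reals.
From mathcomp Require Import topology normedtype.
Import numFieldNormedType.Exports.
Set Implicit Arguments. Unset Strict Implicit. Unset Printing Implicit Defensive.
Import Order.TTheory GRing.Theory Num.Theory.
Local Open Scope classical_set_scope.
Local Open Scope ring_scope.

Section CcF.
Variables (X : topologicalType) (R : realType).

Definition CcF : set (X -> R) :=
  [set f : X -> R | countable (range f) /\ finite_set [set x | ~ {for x, continuous (f : X -> R)}]].

Definition Z (f : X -> R) : set X := [set x | f x = 0].

Definition ZI (I : set (X -> R)) : set (set X) := Z @` I.

Definition chi (a : X) : X -> R := fun x => if pselect (x = a) then 1 else 0.

Definition ideal (I : set (X -> R)) : Prop :=
  [/\ I `<=` CcF, I (fun _ => 0),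
      (forall f g, I f -> I g -> I (f \- g)) &
      (forall f g, CcF f -> I g -> I (f \* g))].

Definition nonzero_ideal (I : set (X -> R)) : Prop :=
  ideal I /\ I <> [set (fun _ : X => 0 : R)].

Definition minimal_ideal (I : set (X -> R)) : Prop :=
  nonzero_ideal I /\ (forall J, nonzero_ideal J -> J `<=` I -> J = I).

Definition gen_ideal (S : set (X -> R)) : set (X -> R) :=
  \bigcap_(J in [set J | ideal J /\ S `<=` J]) J.

(* socle: the sum of all minimal ideals, i.e. the ideal generated by their union *)
Definition socle : set (X -> R) :=
  gen_ideal (\bigcup_(I in minimal_ideal) I).

Definition essential_ideal (I : set (X -> R)) : Prop :=
  ideal I /\ forall J, nonzero_ideal J -> exists f, I f /\ J f /\ f <> (fun _ => 0).

End CcF.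

From Pilot Require Import Defs.
From HB Require Import structures.
From mathcomp Require Import all_boot all_order all_algebra.
From mathcomp Require Import all_classical all_reals.
From mathcomp Require Import topology normedtype.
Import numFieldNormedType.Exports.
Import Order.TTheory GRing.Theory Num.Theory.
Local Open Scope classical_set_scope.
Local Open Scope ring_scope.

(* Every ideal containing a function f with f a <> 0 contains
   chi a = (chi a / f a) * f, hence all multiples of chi a; these multiples
   form an ideal with no nonzero proper subideal.  So the minimal ideals are
   exactly the lines R chi a, whose zero sets are X and X \ {a}, and the socle,
   their sum, consists of the finitely supported functions.  In a T1 space
   finitely supported functions are continuous off their (closed) support, so
   they all lie in C_c(X)_F. *)

Lemma CcF_finite_support (X : topologicalType) (R : realType)
    (hT1 : accessible_space X) (f : X -> R) :
  finite_set (~` Z f) -> CcF f.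
Proof.
move=> fin; split.
- apply: finite_set_countable.
  apply: (@sub_finite_set _ _ ([set 0] `|` (f @` (~` Z f)))).
    move=> _ [x _ <-]; have [->|fx] := pselect (f x = 0); first by left.
    by right; exists x.
  by rewrite finite_setU; split; [exact: finite_set1 | exact: finite_image].
- apply: (sub_finite_set _ fin) => x ncont fx0; apply: ncont.
  have Zf_open : open (Z f).
    rewrite -[Z f]setCK; apply: closed_openC.
    exact: (@accessible_finite_set_closed X).1 hT1 _ fin.
  by apply: cvg_near_cst; rewrite fx0; exact: open_nbhs_nbhs.
Qed.

Lemma setT_neq_setC1 (T : Type) (a : T) : [set: T] <> ~` [set a].
Proof. by move=> /(congr1 (fun P => P a)) /=; rewrite propeqE => -[+ _]; apply. Qed.

Lemma setC1_inj (T : Type) (a b : T) : ~` [set a] = ~` [set b] -> a = b.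
Proof.
move=> /(congr1 (fun P => P a)) /=; rewrite propeqE => -[_ ab].
by apply: contrapT => /ab; apply.
Qed.

Lemma set2_no_three (T : Type) (A B U V W : T) :
  U <> V -> U <> W -> V <> W ->
  ~ [/\ ([set A] `|` [set B]) U, ([set A] `|` [set B]) V & ([set A] `|` [set B]) W].
Proof. by move=> UV UW VW [[]eU []eV []eW]; congruence. Qed.

Section MinimalIdeals.
Variables (X : topologicalType) (R : realType).
Hypothesis hT1 : accessible_space X.

Local Notation chi := (@chi X R).
Local Notation CcF := (@CcF X R).
Local Notation ideal := (@ideal X R).
Local Notation nonzero_ideal := (@nonzero_ideal X R).
Local Notation minimal_ideal := (@minimal_ideal X R).
Local Notation socle := (@socle X R).

Definition chi_span (a : X) : set (X -> R) :=
  [set f | exists c : R, f = (fun x => c * chi a x)].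

Definition finite_support : set (X -> R) := [set f | CcF f /\ finite_set (~` Z f)].

Lemma chi_self (a : X) : chi a a = 1.
Proof. by rewrite /Defs.chi; case: pselect. Qed.

Lemma chi_other (a x : X) : x <> a -> chi a x = 0.
Proof. by rewrite /Defs.chi; case: pselect. Qed.

Lemma chiM (a : X) (g : X -> R) : chi a \* g = (fun x => g a * chi a x).
Proof.
apply/funext => x /=; have [->|xa] := pselect (x = a).
  by rewrite chi_self mul1r mulr1.
by rewrite chi_other // mul0r mulr0.
Qed.

Lemma Z_chiM {a : X} {g : X -> R} : g a <> 0 -> Z (chi a \* g) = ~` [set a].
Proof.
move=> ga; rewrite chiM; apply/seteqP; split => x /=.
  by move=> + xa; rewrite /Z /= xa chi_self mulr1.
by move=> xa; rewrite /Z /= chi_other // mulr0.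
Qed.

Lemma Z0 : Z (fun _ : X => 0 : R) = [set: X].
Proof. by apply/seteqP; split. Qed.

Lemma CcF_cst (c : R) : CcF (fun _ : X => c).
Proof.
split.
  apply: finite_set_countable; apply: (@sub_finite_set _ _ [set c]).
    by move=> _ [x _ <-].
  exact: finite_set1.
rewrite (_ : [set x | _] = set0) //; apply/seteqP; split => // x /= [].
exact: cst_continuous.
Qed.

Lemma chi_span_finite_support (a : X) : chi_span a `<=` finite_support.
Proof.
move=> _ [c ->]; suff fin : finite_set (~` Z (fun x => c * chi a x)).
  by split=> //; exact: CcF_finite_support.
apply: (@sub_finite_set _ _ [set a]); last exact: finite_set1.
by move=> x /= nz; apply: contrapT => xa; apply: nz; rewrite /Z /= chi_other ?mulr0.
Qed.

Lemma chi_span_chi (a : X) : chi_span a (chi a).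
Proof. by exists 1; apply/funext => x; rewrite mul1r. Qed.

Lemma CcF_chi (a : X) : CcF (chi a).
Proof. by have [] := @chi_span_finite_support a _ (chi_span_chi a). Qed.

Lemma ideal_chi_span (a : X) : ideal (chi_span a).
Proof.
split.
- by move=> f /chi_span_finite_support [].
- by exists 0; apply/funext => x; rewrite mul0r.
- by move=> _ _ [c ->] [d ->]; exists (c - d); apply/funext => x /=; rewrite mulrBl.
- move=> f _ _ [c ->]; exists (f a * c); apply/funext => x /=.
  have [->|xa] := pselect (x = a); first by rewrite chi_self !mulr1.
  by rewrite chi_other // !mulr0.
Qed.

Lemma idealD {I : set (X -> R)} {f g : X -> R} : ideal I -> I f -> I g -> I (f \+ g).
Proof.
move=> [_ I0 IB _] If Ig.
suff -> : f \+ g = f \- ((fun _ => 0) \- g) by apply/IB/IB.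
by apply/funext => x /=; rewrite sub0r opprK.
Qed.

Lemma ideal_finite_support : ideal finite_support.
Proof.
split=> [f []//|||].
- split; first exact: CcF_cst.
  by rewrite Z0 setCT; exact: finite_set0.
- move=> f g [_ ff] [_ fg].
  suff fin : finite_set (~` Z (f \- g)) by split=> //; exact: CcF_finite_support.
  apply: (@sub_finite_set _ _ (~` Z f `|` ~` Z g)); last by rewrite finite_setU.
  move=> x /= fgx; apply: contrapT => /not_orP[/contrapT fx /contrapT gx].
  by apply: fgx; rewrite /Z /= fx gx subr0.
- move=> f g _ [_ fg].
  suff fin : finite_set (~` Z (f \* g)) by split=> //; exact: CcF_finite_support.
  by apply: (sub_finite_set _ fg) => x /= fgx gx; apply: fgx; rewrite /Z /= gx mulr0.
Qed.

Lemma ideal_gen_ideal (S : set (X -> R)) :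
  (exists J, ideal J /\ S `<=` J) -> ideal (gen_ideal S).
Proof.
move=> [J0 J0S]; split.
- by move=> f /(_ J0 J0S); case: J0S => -[+ _ _ _] _; apply.
- by move=> J [[]].
- by move=> f g Sf Sg J JS; case: (JS) => -[_ _ JB _] _; apply: JB; [exact: Sf | exact: Sg].
- by move=> f g Cf Sg J JS; case: (JS) => -[_ _ _ JM] _; apply: JM => //; exact: Sg.
Qed.

Lemma nonzero_idealP {J : set (X -> R)} :
  nonzero_ideal J -> exists f a, J f /\ f a <> 0.
Proof.
move=> [[_ J0 _ _] Jn]; apply: contrapT => J_zero; apply: Jn.
apply/seteqP; split=> [f Jf|_ ->] //=; apply/funext => x.
by apply: contrapT => fx; apply: J_zero; exists f, x.
Qed.

Lemma chi_span_sub {I : set (X -> R)} {f : X -> R} {a : X} :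
  ideal I -> I f -> f a <> 0 -> chi_span a `<=` I.
Proof.
move=> [_ _ _ IM] If fa _ [c ->].
suff -> : (fun x => c * chi a x) = (fun _ => c / f a) \* (chi a \* f).
  by apply/IM/IM => //; [exact: CcF_cst | exact: CcF_chi].
by apply/funext => x; rewrite chiM /= mulrA mulfVK //; apply/eqP.
Qed.

Lemma nonzero_ideal_chi_span (a : X) : nonzero_ideal (chi_span a).
Proof.
split; first exact: ideal_chi_span.
move=> span0; have : [set (fun _ : X => 0 : R)] (chi a) by rewrite -span0; exact: chi_span_chi.
by move=> /(congr1 (fun g => g a)) /eqP; rewrite chi_self oner_eq0.
Qed.

Lemma minimal_ideal_chi_span (a : X) : minimal_ideal (chi_span a).
Proof.
split=> [|J nJ Jspan]; first exact: nonzero_ideal_chi_span.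
apply/seteqP; split=> //.
have [f [x [Jf fx]]] := nonzero_idealP nJ.
have xa : x = a.
  by apply: contrapT => xa; apply: fx; have [c ->] := Jspan _ Jf; rewrite chi_other ?mulr0.
by subst x; exact: chi_span_sub nJ.1 Jf fx.
Qed.

Lemma minimal_idealP (I : set (X -> R)) : minimal_ideal I -> exists a, I = chi_span a.
Proof.
move=> [nI Imin]; have [f [a [If fa]]] := nonzero_idealP nI.
exists a; apply/esym/Imin; first exact: nonzero_ideal_chi_span.
exact: chi_span_sub nI.1 If fa.
Qed.

Lemma gen_ideal_chi (a : X) : gen_ideal [set chi a] = chi_span a.
Proof.
apply/seteqP; split=> [f|_ [c ->] J [[_ _ _ JM] SJ]].
  by apply; split; [exact: ideal_chi_span | move=> _ ->; exact: chi_span_chi].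
by apply: (JM (fun _ => c)); [exact: CcF_cst | exact: SJ].
Qed.

Lemma ZI_chi_span (a : X) : ZI (chi_span a) = [set [set: X]] `|` [set ~` [set a]].
Proof.
apply/seteqP; split=> [_ [_ [c ->] <-] /=|_ [->|->]].
- have [->|c0] := pselect (c = 0).
    by left; apply/seteqP; split => x //= _; rewrite /Z /= mul0r.
  by right; rewrite -(@Z_chiM a (fun _ => c)) // chiM.
- by exists (fun _ => 0); [by case: (ideal_chi_span a) | exact: Z0].
- exists (chi a); first exact: chi_span_chi.
  have one_neq0 : (1 : R) <> 0 by apply/eqP; exact: oner_neq0.
  by rewrite -(@Z_chiM a (fun _ => 1) one_neq0); congr Z; apply/funext => x; rewrite /= mulr1.
Qed.

(* Two points of nonvanishing a <> x in I would give three zero sets X, X \ {a}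
   and X \ {x}. *)
Lemma ZI_two_chi_span {I : set (X -> R)} {A B : set X} :
  nonzero_ideal I -> ZI I = [set A] `|` [set B] -> exists a, I = chi_span a.
Proof.
move=> nI ZIE; have [f [a [If fa]]] := nonzero_idealP nI.
have [[_ I0 _ IM] _] := nI.
exists a; apply/seteqP; split; last exact: chi_span_sub nI.1 If fa.
move=> g Ig; exists (g a); rewrite -chiM; apply/funext => x.
have [->|xa] := pselect (x = a); first by rewrite /= chi_self mul1r.
rewrite /= chi_other // mul0r; apply: contrapT => gx.
apply: (@set2_no_three _ A B [set: X] (~` [set a]) (~` [set x])).
- exact: setT_neq_setC1.
- exact: setT_neq_setC1.
- by move=> eq_setC1; apply/xa/esym/setC1_inj.
rewrite -ZIE -Z0 -(Z_chiM fa) -(Z_chiM gx).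
split; [exists (fun _ => 0) | exists (chi a \* f) | exists (chi x \* g)] => //.
  by apply: IM => //; exact: CcF_chi.
by apply: IM => //; exact: CcF_chi.
Qed.

Lemma minimal_ideal_gen_chi (I : set (X -> R)) :
  minimal_ideal I <-> exists a, I = gen_ideal [set chi a].
Proof.
split=> [/minimal_idealP [a ->]|[a ->]]; first by exists a; rewrite gen_ideal_chi.
by rewrite gen_ideal_chi; exact: minimal_ideal_chi_span.
Qed.

Lemma minimal_ideal_ZI (I : set (X -> R)) : nonzero_ideal I ->
  minimal_ideal I <-> exists A B : set X, A <> B /\ ZI I = [set A] `|` [set B].
Proof.
move=> nI; split=> [/minimal_idealP [a ->]|[A [B [_ ZIE]]]].
  by exists [set: X], (~` [set a]); split; [exact: setT_neq_setC1 | exact: ZI_chi_span].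
by have [a ->] := ZI_two_chi_span nI ZIE; exact: minimal_ideal_chi_span.
Qed.

(* A finitely supported f is the finite sum of the f a * chi a over its support. *)
Lemma socleE : socle = finite_support.
Proof.
have socle_ideal : ideal socle.
  apply: ideal_gen_ideal; exists finite_support; split; first exact: ideal_finite_support.
  by move=> f [I /minimal_idealP [a ->]]; exact: chi_span_finite_support.
apply/seteqP; split=> [f|f [_ /finite_seqP [s supp]]].
  apply; split; first exact: ideal_finite_support.
  by move=> g [I /minimal_idealP [a ->]]; exact: chi_span_finite_support.
have : ~` Z f `<=` [set` s] by rewrite supp.
elim: s {supp} f => [|a s IH] f fs.
  suff -> : f = (fun _ => 0) by case: socle_ideal.
  by apply/funext => x; apply: contrapT => /fs.
pose g := f \- (fun x => f a * chi a x).
have -> : f = g \+ (fun x => f a * chi a x) by apply/funext => x; rewrite /g /= subrK.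
apply: (idealD socle_ideal).
  apply: IH => x /= gx; have [xa|xa] := pselect (x = a).
    by exfalso; apply: gx; rewrite /Z /g /= xa chi_self mulr1 subrr.
  have /fs : (~` Z f) x.
    by move=> fx; apply: gx; rewrite /Z /g /= chi_other // mulr0 subr0; exact: fx.
  by rewrite /= in_cons => /orP[/eqP|].
by move=> J [_]; apply; exists (chi_span a); [exact: minimal_ideal_chi_span | exists (f a)].
Qed.

Lemma essential_socle : essential_ideal socle.
Proof.
split; first by rewrite socleE; exact: ideal_finite_support.
move=> J nJ; have [f [a [Jf fa]]] := nonzero_idealP nJ.
exists (chi a \* f); split; [|split].
- by rewrite socleE chiM; apply: chi_span_finite_support; exists (f a).
- by case: nJ => -[_ _ _ JM] _; apply: JM => //; exact: CcF_chi.
- by move=> /(congr1 (fun h => h a)) /=; rewrite chi_self mul1r.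
Qed.

Lemma bigcap_Z_socle : \bigcap_(f in socle) Z f = set0.
Proof.
apply/seteqP; split=> // x socle_x.
have : socle (chi x) by rewrite socleE; exact/chi_span_finite_support/chi_span_chi.
by move=> /socle_x /eqP; rewrite /Z /= chi_self oner_eq0.
Qed.

End MinimalIdeals.

Theorem proposition3p16 (X : topologicalType) (R : realType)
  (hT1 : accessible_space X) :
  (* (i) *)
  (forall I : set (X -> R), nonzero_ideal I ->
     (minimal_ideal I <-> exists a : X, I = gen_ideal [set @chi X R a])) /\
  (* (ii) *)
  (forall I : set (X -> R), nonzero_ideal I ->
     (minimal_ideal I <->
      exists A B : set X, A <> B /\ ZI I = [set A] `|` [set B])) /\
  (* (iii) *)
  (@socle X R = [set f | CcF f /\ finite_set (~` Z f)]) /\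
  (* (iv) *)
  (essential_ideal (@socle X R) /\
   \bigcap_(f in @socle X R) Z f = set0).
Proof.
split; first by move=> I _; exact: minimal_ideal_gen_chi.
split; first by move=> I; exact: minimal_ideal_ZI.
split; first exact: socleE.
by split; [exact: essential_socle | exact: bigcap_Z_socle].
Qed.
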